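(* Let $\mathcal{H}=\mathcal{H}^{(1)}\otimes\mathcal{H}^{(2)}$ and let $T^{(i)}(u),\bar T^{(i)}(u)\in\mathrm{End}(\mathbb{C}^N)\otimes\mathrm{End}(\mathcal{H}^{(i)})$ ($i=1,2$) be monodromy matrices, and put $$T_0(u)=T_0^{(2)}(u)T_0^{(1)}(u),\qquad \bar T_0(u)=\bar T_0^{(2)}(u)\bar T_0^{(1)}(u)\in\mathrm{End}(\mathbb{C}^N)\otimes\mathrm{End}(\mathcal{H}).$$ Let $\mathbf{K}(u)\in\mathrm{End}(\mathbb{C}^N)\otimes\mathrm{End}(\mathcal{H}_B)$ and let $\langle\Psi^{(i)}|\in(\mathcal{H}^{(i)})^*\otimes\mathrm{End}(\mathcal{H}_B)$, $i=1,2$, satisfy the same $KT$-relation $$\mathbf{K}_0(u)\langle\Psi^{(i)}|T_0^{(i)}(u)=\langle\Psi^{(i)}|\bar T_0^{(i)}(-u)\mathbf{K}_0(u),\qquad i=1,2 .$$ Then $\langle\Psi|:=\langle\Psi^{(2)}|\langle\Psi^{(1)}|\in\mathcal{H}^*\otimes\mathrm{End}(\mathcal{H}_B)$ satisfies $$\mathbf{K}_0(u)\langle\Psi|T_0(u)=\langle\Psi|\bar T_0(-u)\mathbf{K}_0(u).$$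
   Context: $N\ge 1$, $\mathcal{H}_B=\mathbb{C}^{d_B}$ is the boundary space. The index $0$ labels the auxiliary space $\mathbb{C}^N$. All objects are regarded as elements of $\mathrm{End}(\mathbb{C}^N)\otimes\mathrm{End}(\mathcal{H}_B)$ with coefficients that are operators on, or covectors over, the quantum spaces; products are taken in $\mathrm{End}(\mathbb{C}^N)$ and in $\mathrm{End}(\mathcal{H}_B)$ in the written order, e.g. $(\mathbf{K}\langle\Psi|T)_{i,j}=\sum_{k}\mathbf{K}_{i,k}\langle\Psi|T_{k,j}$ with the boundary-space matrices multiplied in the written order. The product $\langle\Psi^{(2)}|\langle\Psi^{(1)}|$ is the tensor product of the covectors in the quantum spaces and the matrix product (in this order) in $\mathrm{End}(\mathcal{H}_B)$: writing $\langle\Psi^{(i)}|=\sum_{a,b}\langle\psi^{(i)}_{a,b}|\otimes e^B_{a,b}$, one has $\langle\Psi^{(2)}|\langle\Psi^{(1)}|=\sum_{a,b,c}\langle\psi^{(1)}_{c,b}|\otimes\langle\psi^{(2)}_{a,c}|\otimes e^B_{a,b}$. *)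

From HB Require Import structures.
From mathcomp Require Import all_boot all_order all_algebra.
From mathcomp Require Import complex reals.
Set Implicit Arguments. Unset Strict Implicit. Unset Printing Implicit Defensive.
Import Order.TTheory GRing.Theory Num.Theory.
Local Open Scope ring_scope.

Section Defs.
Variables (R : realType) (N dB : nat).
Local Notation C := (complex R).

(* An operator on a quantum space with finite basis Q, given by its matrix
   elements  A l m = <l|A|m>. *)
Definition qop (Q : finType) := Q -> Q -> C.

(* A u-dependent element of End(C^N) (x) End(H), H with basis Q:
   T u i j is the (i,j) entry (an operator on H) of the monodromy matrix. *)
Definition monodromy (Q : finType) := C -> 'I_N -> 'I_N -> qop Q.

(* A u-dependent element of End(C^N) (x) End(H_B), H_B = C^dB. *)
Definition Kmat := C -> 'I_N -> 'I_N -> 'M[C]_dB.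

(* A covector in H^* (x) End(H_B): Psi l is the End(H_B)-coefficient of <l|,
   i.e. <Psi| = \sum_l <l| (x) Psi l. *)
Definition covec (Q : finType) := Q -> 'M[C]_dB.

(* (K_0(u) <Psi| T_0(u))_{i,j}, component along the basis covector <m| of H^* :
   \sum_k \sum_l K_{i,k}(u) Psi_l <l|T_{k,j}(u)|m>. *)
Definition KPsiT (Q : finType) (K : Kmat) (Psi : covec Q) (T : monodromy Q)
  (u : C) (i j : 'I_N) (m : Q) : 'M[C]_dB :=
  \sum_(k < N) \sum_(l : Q) (T u k j l m) *: (K u i k *m Psi l).

(* (<Psi| Tbar_0(-u) K_0(u))_{i,j}, component along <m|. *)
Definition PsiTK (Q : finType) (K : Kmat) (Psi : covec Q) (Tb : monodromy Q)
  (u : C) (i j : 'I_N) (m : Q) : 'M[C]_dB :=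
  \sum_(k < N) \sum_(l : Q) (Tb (- u) i k l m) *: (Psi l *m K u k j).

Definition KT_relation (Q : finType) (K : Kmat) (Psi : covec Q)
  (T Tb : monodromy Q) : Prop :=
  forall (u : C) (i j : 'I_N) (m : Q), KPsiT K Psi T u i j m = PsiTK K Psi Tb u i j m.

(* T_0(u) = T^(2)_0(u) T^(1)_0(u) on H = H^(1) (x) H^(2), basis pairs (l1,l2):
   (T)_{i,j} = \sum_k T^(2)_{i,k} (x) T^(1)_{k,j}, with T^(2) acting on H^(2)
   and T^(1) on H^(1). *)
Definition mono_prod (Q1 Q2 : finType) (T2 : monodromy Q2) (T1 : monodromy Q1)
  : monodromy (prod Q1 Q2) :=
  fun u i j p q => \sum_(k < N) T2 u i k p.2 q.2 * T1 u k j p.1 q.1.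

(* <Psi^(2)|<Psi^(1)| = \sum_{a,b,c} <psi1_{c,b}| (x) <psi2_{a,c}| (x) e_{a,b}:
   its End(H_B)-coefficient along <l1| (x) <l2| is Psi2 l2 * Psi1 l1. *)
Definition covec_prod (Q1 Q2 : finType) (Psi2 : covec Q2) (Psi1 : covec Q1)
  : covec (prod Q1 Q2) :=
  fun p => Psi2 p.2 *m Psi1 p.1.

End Defs.

From HB Require Import structures.
From mathcomp Require Import all_boot all_order all_algebra.
From mathcomp Require Import complex reals.
Import GRing.Theory.
Local Open Scope ring_scope.

(* Every component of K <Psi2|<Psi1| T2 T1 regroups as ((K <Psi2| T2) <Psi1|) T1.
   The KT-relation of the second chain turns K <Psi2| T2 into <Psi2| Tb2(-u) K;
   regrouping once more puts K next to <Psi1| T1, and the KT-relation of the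
   first chain moves it to the right end, giving <Psi2|<Psi1| Tb2(-u) Tb1(-u) K. *)

Section BigSums.
Variables (V : nmodType) (I J I' J' : finType).

Lemma sum_pair (F : I * J -> V) :
  \sum_(p : I * J) F p = \sum_(a : I) \sum_(b : J) F (a, b).
Proof. by rewrite pair_big; apply: eq_bigr => -[]. Qed.

Lemma exchange_big2 (F : I -> J -> I' -> J' -> V) :
  \sum_i \sum_j \sum_i' \sum_j' F i j i' j' =
  \sum_i' \sum_j' \sum_i \sum_j F i j i' j'.
Proof.
under eq_bigr do rewrite exchange_big.
rewrite exchange_big; apply: eq_bigr => i' _.
by under eq_bigr do rewrite exchange_big; rewrite exchange_big.
Qed.

End BigSums.

Section ScaledSums.
Variables (S : comPzRingType) (I : finType) (m n p : nat).

Lemma mulmx_suml_scale (a : I -> S) (A : I -> 'M[S]_(m, n)) (B : 'M[S]_(n, p)) :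
  (\sum_x a x *: A x) *m B = \sum_x a x *: (A x *m B).
Proof. by rewrite mulmx_suml; apply: eq_bigr => x _; rewrite scalemxAl. Qed.

Lemma mulmx_sumr_scale (A : 'M[S]_(m, n)) (b : I -> S) (B : I -> 'M[S]_(n, p)) :
  A *m (\sum_x b x *: B x) = \sum_x b x *: (A *m B x).
Proof. by rewrite mulmx_sumr; apply: eq_bigr => x _; rewrite scalemxAr. Qed.

End ScaledSums.

Section ProductCovector.
Variables (R : realType) (N dB : nat) (Q1 Q2 : finType).
Variables (K : Kmat R N dB) (Psi1 : covec R dB Q1) (Psi2 : covec R dB Q2).

Lemma KPsiT_covec_prod (T1 : monodromy R N Q1) (T2 : monodromy R N Q2) u i j m1 m2 :
  KPsiT K (covec_prod Psi2 Psi1) (mono_prod T2 T1) u i j (m1, m2) =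
  \sum_(k < N) \sum_(l1 : Q1) T1 u k j l1 m1 *: (KPsiT K Psi2 T2 u i k m2 *m Psi1 l1).
Proof.
rewrite /KPsiT /covec_prod /mono_prod /=.
under eq_bigr => k _ do rewrite sum_pair exchange_big.
under eq_bigr => k _ do under eq_bigr => l2 _ do under eq_bigr => l1 _ do
  rewrite scaler_suml.
under eq_bigr => k _ do under eq_bigr => l2 _ do rewrite exchange_big.
under [RHS]eq_bigr => k' _ do under eq_bigr => l1 _ do
  rewrite mulmx_suml scaler_sumr.
under [RHS]eq_bigr => k' _ do under eq_bigr => l1 _ do under eq_bigr => k _ do
  rewrite mulmx_suml_scale scaler_sumr.
rewrite [RHS]exchange_big2.
apply: eq_bigr => k _; apply: eq_bigr => l2 _; apply: eq_bigr => k' _.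
by apply: eq_bigr => l1 _; rewrite scalerA mulrC mulmxA.
Qed.

Lemma PsiTK_covec_prod (Tb1 : monodromy R N Q1) (Tb2 : monodromy R N Q2) u i j m1 m2 :
  PsiTK K (covec_prod Psi2 Psi1) (mono_prod Tb2 Tb1) u i j (m1, m2) =
  \sum_(k < N) \sum_(l2 : Q2) Tb2 (- u) i k l2 m2 *: (Psi2 l2 *m PsiTK K Psi1 Tb1 u k j m1).
Proof.
rewrite /PsiTK /covec_prod /mono_prod /=.
under eq_bigr => k' _ do rewrite sum_pair.
under eq_bigr => k' _ do under eq_bigr => l1 _ do under eq_bigr => l2 _ do
  rewrite scaler_suml.
under eq_bigr => k' _ do under eq_bigr => l1 _ do rewrite exchange_big.
under [RHS]eq_bigr => k _ do under eq_bigr => l2 _ do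
  rewrite mulmx_sumr scaler_sumr.
under [RHS]eq_bigr => k _ do under eq_bigr => l2 _ do under eq_bigr => k' _ do
  rewrite mulmx_sumr_scale scaler_sumr.
rewrite [RHS]exchange_big2.
apply: eq_bigr => k' _; apply: eq_bigr => l1 _; apply: eq_bigr => k _.
by apply: eq_bigr => l2 _; rewrite scalerA mulmxA.
Qed.

Lemma PsiTK_KPsiT_assoc (T1 : monodromy R N Q1) (Tb2 : monodromy R N Q2) u i j m1 m2 :
  \sum_(k < N) \sum_(l1 : Q1) T1 u k j l1 m1 *: (PsiTK K Psi2 Tb2 u i k m2 *m Psi1 l1) =
  \sum_(k < N) \sum_(l2 : Q2) Tb2 (- u) i k l2 m2 *: (Psi2 l2 *m KPsiT K Psi1 T1 u k j m1).
Proof.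
rewrite /PsiTK /KPsiT.
under eq_bigr => k' _ do under eq_bigr => l1 _ do
  rewrite mulmx_suml scaler_sumr.
under eq_bigr => k' _ do under eq_bigr => l1 _ do under eq_bigr => k _ do
  rewrite mulmx_suml_scale scaler_sumr.
under [RHS]eq_bigr => k _ do under eq_bigr => l2 _ do
  rewrite mulmx_sumr scaler_sumr.
under [RHS]eq_bigr => k _ do under eq_bigr => l2 _ do under eq_bigr => k' _ do
  rewrite mulmx_sumr_scale scaler_sumr.
rewrite exchange_big2.
apply: eq_bigr => k _; apply: eq_bigr => l2 _; apply: eq_bigr => k' _.
by apply: eq_bigr => l1 _; rewrite !scalerA mulrC mulmxA.
Qed.

End ProductCovector.

Theorem proposition1 (R : realType) (N dB d1 d2 : nat)
  (T1 Tb1 : monodromy R N 'I_d1) (T2 Tb2 : monodromy R N 'I_d2)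
  (K : Kmat R N dB) (Psi1 : covec R dB 'I_d1) (Psi2 : covec R dB 'I_d2) :
  (0 < N)%N ->
  KT_relation K Psi1 T1 Tb1 ->
  KT_relation K Psi2 T2 Tb2 ->
  KT_relation K (covec_prod Psi2 Psi1) (mono_prod T2 T1) (mono_prod Tb2 Tb1).
Proof.
move=> _ KT1 KT2 u i j [m1 m2].
rewrite KPsiT_covec_prod PsiTK_covec_prod.
under eq_bigr => k _ do under eq_bigr => l1 _ do rewrite KT2.
rewrite PsiTK_KPsiT_assoc.
by under eq_bigr => k _ do under eq_bigr => l2 _ do rewrite KT1.
Qed.
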